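(* Let $G=(V,E)$ be a finite simple undirected graph whose vertex set is partitioned into color classes $V_1,\dots,V_r$, and suppose $(V_{\eta_1},\dots,V_{\eta_r})$, $\eta\in\mathfrak{S}_r$, is a color perfect elimination ordering. Then for every $i\in[r]$ the induced subgraph $G[V_i]$ is a disjoint union of cliques.
   Context: An ordered partition $(V_{\eta_1},\dots,V_{\eta_r})$ is a color perfect elimination ordering (cpeo) if for every $i\in[r]$ and every $v\in V_{\eta_i}$, $v$ is simplicial in $G[V_{\eta_i}\cup\dots\cup V_{\eta_r}]$, i.e. its neighbours in that induced subgraph form a clique. *)

From mathcomp Require Import all_boot all_order all_fingroup.
Set Implicit Arguments. Unset Strict Implicit. Unset Printing Implicit Defensive.

Definition simple_graph (T : finType) (e : rel T) : Prop :=
  symmetric e /\ irreflexive e.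

Definition is_clique (T : finType) (e : rel T) (K : {set T}) : Prop :=
  forall x y, x \in K -> y \in K -> x != y -> e x y.

Definition simplicial_in (T : finType) (e : rel T) (U : {set T}) (v : T) : Prop :=
  is_clique e [set u in U | e v u].

Definition color_class (T : finType) (r : nat) (c : T -> 'I_r) (k : 'I_r) : {set T} :=
  [set v | c v == k].

(* V_{eta_i} ∪ ... ∪ V_{eta_r}  (0-indexed: positions j >= i). *)
Definition tail_union (T : finType) (r : nat) (c : T -> 'I_r) (eta : 'S_r) (i : 'I_r)
  : {set T} :=
  \bigcup_(j : 'I_r | i <= j) color_class c (eta j).

Definition cpeo (T : finType) (e : rel T) (r : nat) (c : T -> 'I_r) (eta : 'S_r) : Prop :=
  forall (i : 'I_r) (v : T), v \in color_class c (eta i) ->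
    simplicial_in e (tail_union c eta i) v.

Definition disjoint_union_of_cliques (T : finType) (e : rel T) (S : {set T}) : Prop :=
  exists P : {set {set T}}, partition P S /\
    (forall K, K \in P -> is_clique e K) /\
    (forall K1 K2 x y, K1 \in P -> K2 \in P -> K1 != K2 ->
       x \in K1 -> y \in K2 -> ~~ e x y).

From mathcomp Require Import all_boot all_order all_fingroup.

Set Implicit Arguments. Unset Strict Implicit. Unset Printing Implicit Defensive.

(* The middle vertex y of a path x - y - z inside a colour class V_k is simplicial
   in a tail of the ordering containing V_k, so x and z are adjacent: adjacency
   is transitive on V_k, and its reflexive closure partitions V_k into cliques. *)

Section TransitiveAdjacency.

Variables (T : finType) (e : rel T) (S : {set T}).
Hypothesis e_sym : symmetric e.
Hypothesis e_trans : {in S & &, forall x y z, e x y -> e y z -> x != z -> e x z}.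

Let adj_or_eq : rel T := [rel x y | (x == y) || e x y].

Lemma adj_or_eq_equivalence : {in S & &, equivalence_rel adj_or_eq}.
Proof.
have adj_or_eq_trans : {in S & &, forall x y z,
    adj_or_eq x y -> adj_or_eq y z -> adj_or_eq x z}.
  move=> x y z xS yS zS; rewrite /adj_or_eq /=.
  case/orP=> [/eqP-> // | exy]; case/orP=> [/eqP<- | eyz]; first by rewrite exy orbT.
  by case: (eqVneq x z) => //= xz; apply: (e_trans xS yS zS exy eyz xz).
move=> x y z xS yS zS; split=> [|Rxy]; first by rewrite /adj_or_eq /= eqxx.
apply/idP/idP; last exact: adj_or_eq_trans.
apply: adj_or_eq_trans => //=.
by move: Rxy; rewrite /adj_or_eq /= eq_sym e_sym.
Qed.

Lemma disjoint_union_of_cliques_trans : disjoint_union_of_cliques e S.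
Proof.
pose P := equivalence_partition adj_or_eq S.
have partP : partition P S := equivalence_partitionP adj_or_eq_equivalence.
have /and3P[/eqP coverP tiP _] := partP.
have memS K x : K \in P -> x \in K -> x \in S.
  by move=> PK Kx; rewrite -coverP; apply/bigcupP; exists K.
have inP := pblock_equivalence_partition adj_or_eq_equivalence.
exists P; split=> //; split.
  move=> K PK x y Kx Ky nxy.
  have := inP x y (memS K x PK Kx) (memS K y PK Ky).
  by rewrite (def_pblock tiP PK Kx) Ky /adj_or_eq /= (negbTE nxy) => /esym.
move=> K1 K2 x y PK1 PK2 nK12 K1x K2y; apply: contraNN nK12 => exy.
have xS := memS K1 x PK1 K1x; have yS := memS K2 y PK2 K2y.
have y_in_x : y \in pblock P x by rewrite inP // /adj_or_eq /= exy orbT.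
by rewrite -(def_pblock tiP PK1 K1x) -(def_pblock tiP PK2 K2y) (same_pblock tiP y_in_x).
Qed.

End TransitiveAdjacency.

Lemma color_class_sub_tail_union (T : finType) (r : nat) (c : T -> 'I_r)
    (eta : 'S_r) (i : 'I_r) :
  color_class c (eta i) \subset tail_union c eta i.
Proof. by apply/subsetP=> v vc; apply/bigcupP; exists i. Qed.

Lemma cpeo_color_class_trans (T : finType) (e : rel T) (r : nat) (c : T -> 'I_r)
    (eta : 'S_r) (k : 'I_r) :
  symmetric e -> cpeo e c eta ->
  {in color_class c k & &, forall x y z, e x y -> e y z -> x != z -> e x z}.
Proof.
move=> e_sym hcpeo x y z xk yk zk exy eyz nxz.
set j := (eta^-1)%g k.
have eta_j : eta j = k by rewrite permKV.
have in_tail u : u \in color_class c k -> u \in tail_union c eta j.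
  by move=> uk; apply: (subsetP (color_class_sub_tail_union c eta j)); rewrite eta_j.
apply: (hcpeo j y) nxz; first by rewrite eta_j.
  by rewrite inE in_tail //= e_sym.
by rewrite inE in_tail.
Qed.

Theorem corollary3p3 (T : finType) (e : rel T) (r : nat) (c : T -> 'I_r)
    (eta : 'S_r) :
  simple_graph e -> cpeo e c eta ->
  forall i : 'I_r, disjoint_union_of_cliques e (color_class c i).
Proof.
move=> [e_sym _] hcpeo i.
exact: disjoint_union_of_cliques_trans e_sym (cpeo_color_class_trans e_sym hcpeo).
Qed.
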